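(* Assume the standing hypotheses (H). If $\{u,v\}$ is a part of $G$ of size $2$, then $L(u)\cap L(v)=\varnothing$.
   Context: A list assignment $L$ assigns to each vertex $v$ a set $L(v)$ of colors; an $L$-coloring is a proper coloring $f$ with $f(v)\in L(v)$ for all $v$; $\mathrm{ch}$ denotes choice number and $\chi$ chromatic number. A part of a complete multipartite graph is one of its maximal stable sets. Standing hypotheses (H): $k\ge1$ and $n\ge 2k+2$ are integers; $G$ is a complete $k$-partite graph (exactly $k$ nonempty parts) on $n$ vertices; $L$ is a list assignment for $G$ with $|L(v)|\ge\lceil (n+k-1)/3\rceil$ for every vertex $v$; $G$ has no $L$-coloring; $\left|\bigcup_{v\in V(G)}L(v)\right|\le n-1$; and every graph $H$ with fewer than $n$ vertices satisfies $\mathrm{ch}(H)\le\max\{\chi(H),\lceil(|V(H)|+\chi(H)-1)/3\rceil\}$. *)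

From mathcomp Require Import all_boot.
Set Implicit Arguments. Unset Strict Implicit. Unset Printing Implicit Defensive.

(* A (simple) graph is a relation e on a finite vertex type T, assumed
   symmetric and irreflexive where relevant. Colors are natural numbers;
   a list assignment is L : T -> seq nat, with |L(v)| = size (undup (L v)). *)

Definition list_size (s : seq nat) : nat := size (undup s).

Definition proper_coloring (T : finType) (e : rel T) (f : T -> nat) : Prop :=
  forall x y, e x y -> f x <> f y.

Definition L_colorable (T : finType) (e : rel T) (L : T -> seq nat) : Prop :=
  exists f : T -> nat, (forall v, f v \in L v) /\ proper_coloring e f.

Definition choosable (T : finType) (e : rel T) (k : nat) : Prop :=
  forall L : T -> seq nat, (forall v, k <= list_size (L v)) -> L_colorable e L.

Definition k_colorable (T : finType) (e : rel T) (k : nat) : bool :=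
  [exists f : {ffun T -> 'I_k}, [forall x, forall y, e x y ==> (f x != f y)]].

(* chromatic number: least k <= #|T| such that G is k-colorable
   (always exists for loopless graphs, using #|T| colors). *)
Definition chi (T : finType) (e : rel T) : nat :=
  find (k_colorable e) (iota 0 #|T|.+1).

Definition ceil_div (a b : nat) : nat := (a + b.-1) %/ b.

Definition stable (T : finType) (e : rel T) (S : {set T}) : bool :=
  [forall x in S, forall y in S, ~~ e x y].

(* a part of a complete multipartite graph = a maximal stable set *)
Definition is_part (T : finType) (e : rel T) (S : {set T}) : bool :=
  maxset (stable e) S.

Definition complete_multipartite (T : finType) (e : rel T) (k : nat) : Prop :=
  exists p : T -> 'I_k,
    (forall i : 'I_k, exists v, p v = i) /\ (forall x y, e x y = (p x != p y)).

From mathcomp Require Import all_boot.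
From mathcomp Require Import zify.

Set Implicit Arguments. Unset Strict Implicit. Unset Printing Implicit Defensive.

(* Let S = {u, v} be a part of the complete k-partite graph G and suppose some
   color c lies in L(u) and L(v).  We derive an L-coloring of G, contradicting
   the hypotheses:
   - a part of a complete multipartite graph is a whole color class, so the
     graph G - S induced on the complement of S is (k-1)-colorable, hence
     chi(G - S) <= k - 1 ([part_is_class], [k_colorable_avoid],
     [chi_le_colorable]);
   - deleting c from every list costs at most one color per list
     ([list_size_filter]), and an arithmetic estimate shows that the reduced
     lists still meet the choosability bound for G - S, which has n - 2 < n
     vertices ([list_bound_after_deletion]);
   - by minimality, G - S is colorable from the reduced lists, and coloring
     the stable set S with c extends this to an L-coloring of G
     ([extend_coloring_on_stable_set]). *)

Lemma list_size_filter (c : nat) (s : seq nat) :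
  list_size s <= (list_size (filter (predC1 c) s)).+1.
Proof.
rewrite /list_size -filter_undup size_filter.
have := count_predC (predC1 c) (undup s).
have : count (predC (predC1 c)) (undup s) <= 1.
  have -> : count (predC (predC1 c)) (undup s) = count_mem c (undup s).
    by apply: eq_count => x /=; rewrite negbK.
  by rewrite count_uniq_mem ?undup_uniq //; case: (c \in _).
lia.
Qed.

Lemma part_is_class (V : finType) (e : rel V) (k : nat) (p : V -> 'I_k)
    (S : {set V}) (u : V) :
  (forall x y, e x y = (p x != p y)) -> is_part e S -> u \in S ->
  S = [set w | p w == p u].
Proof.
move=> hp /maxsetP [stS maxS] uS; apply/esym/maxS.
- apply/forall_inP => x; rewrite inE => /eqP px.
  by apply/forall_inP => y; rewrite inE hp px => /eqP ->; rewrite eqxx.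
- apply/subsetP => w wS; rewrite inE.
  by move/forall_inP: stS => /(_ w wS) /forall_inP /(_ u uS); rewrite hp negbK.
Qed.

Lemma chi_le_colorable (T : finType) (h : rel T) (m : nat) :
  k_colorable h m -> chi h <= m.
Proof.
move=> hm; rewrite /chi leqNgt; apply/negP => lt.
have := before_find 0 lt; rewrite nth_iota; last first.
  by have := find_size (k_colorable h) (iota 0 #|T|.+1); rewrite size_iota; lia.
by rewrite add0n hm.
Qed.

Lemma k_colorable_avoid (T : finType) (h : rel T) (k : nat) (q : T -> 'I_k)
    (i0 : 'I_k) :
  (forall x, q x != i0) -> (forall x y, h x y -> q x != q y) ->
  k_colorable h k.-1.
Proof.
move=> avoid proper.
pose shift (x : T) : nat := if q x < i0 then nat_of_ord (q x) else (q x).-1.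
have shift_lt x : shift x < k.-1.
  have := avoid x; rewrite -(inj_eq (@ord_inj k)) /shift.
  have := ltn_ord (q x); have := ltn_ord i0; case: ifP => /=; lia.
have shift_inj x y : shift x = shift y -> q x = q y.
  have := avoid x; have := avoid y; rewrite -!(inj_eq (@ord_inj k)) /shift => ax ay.
  by case: ifP => lt_x; case: ifP => lt_y E; apply: ord_inj; lia.
apply/existsP; exists [ffun x => Ordinal (shift_lt x)].
apply/forallP => x; apply/forallP => y; apply/implyP => hxy.
by rewrite !ffunE; apply: contra (proper _ _ hxy) => /eqP [] /shift_inj ->.
Qed.

(* If every list on the stable set S contains c, an L-coloring of G follows
   from a coloring of G - S from the lists with c removed: color S with c. *)
Lemma extend_coloring_on_stable_set (V : finType) (e : rel V) (S : {set V})
    (L : V -> seq nat) (c : nat) :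
  stable e S -> (forall w, w \in S -> c \in L w) ->
  L_colorable (fun x y : {w | w \notin S} => e (val x) (val y))
              (fun x => filter (predC1 c) (L (val x))) ->
  L_colorable e L.
Proof.
move=> /forall_inP stS cS [g [g_in g_proper]].
have g_neq x : g x != c by have := g_in x; rewrite mem_filter => /andP [].
pose f w := if insub w is Some x then g x else c.
exists f; split.
  move=> w; rewrite /f; case: insubP => [x _ <- | /negbNE /cS //].
  by have := g_in x; rewrite mem_filter => /andP [].
move=> x y exy; rewrite /f.
case: insubP => [x' _ hx | /negbNE xS]; case: insubP => [y' _ hy | /negbNE yS].
- by apply: g_proper; rewrite hx hy.
- by move=> E; move: (g_neq x'); rewrite E eqxx.
- by move=> E; move: (g_neq y'); rewrite -E eqxx.
- by move: exy; have /forall_inP /(_ y yS) /negbTE -> := stS x xS.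
Qed.

(* With chi(G - S) <= k - 1, lists that lost at most one color still satisfy
   the choosability bound for the graph G - S on n - 2 vertices. *)
Lemma list_bound_after_deletion (n k m s : nat) :
  1 <= k -> 2 * k + 2 <= n -> m <= k.-1 ->
  ceil_div (n + k - 1) 3 <= s.+1 ->
  maxn m (ceil_div (n - 2 + m - 1) 3) <= s.
Proof. rewrite /ceil_div geq_max; lia. Qed.

Theorem corollary11 (k n : nat) (V : finType) (e : rel V) (L : V -> seq nat) :
  1 <= k ->
  2 * k + 2 <= n ->
  #|V| = n ->
  complete_multipartite e k ->
  (forall v, ceil_div (n + k - 1) 3 <= list_size (L v)) ->
  ~ L_colorable e L ->
  list_size (flatten [seq L v | v <- enum V]) <= n - 1 ->
  (forall (T : finType) (h : rel T), symmetric h -> irreflexive h ->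
     #|T| < n ->
     choosable h (maxn (chi h) (ceil_div (#|T| + chi h - 1) 3))) ->
  forall u v : V, u != v -> is_part e [set u; v] ->
    forall c, c \in L u -> c \notin L v.
Proof.
move=> hk hn hV [p [_ hp]] hL hnc _ hmin u v huv hpart c cu.
apply/negP => cv; apply: hnc.
set S := [set u; v] in hpart *.
have classS := part_is_class hp hpart (set21 u v).
pose T : finType := {w : V | w \notin S}.
pose h (x y : T) := e (val x) (val y).
have card_rest : #|T| = n - 2.
  rewrite card_sig -hV -(cardsC S) cards2 huv addKn.
  by apply: eq_card => w; rewrite !inE.
have chi_rest : chi h <= k.-1.
  apply/chi_le_colorable/(@k_colorable_avoid _ _ _ (fun x => p (val x)) (p u)).
    by move=> [w wS] /=; apply: contra wS; rewrite classS inE.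
  by move=> x y; rewrite /h hp.
apply: (@extend_coloring_on_stable_set V e S L c).
- by case/maxsetP: hpart.
- by move=> w; rewrite !inE => /orP [] /eqP ->.
apply: hmin; rewrite ?card_rest.
- by move=> x y; rewrite /h !hp eq_sym.
- by move=> x; rewrite /h hp eqxx.
- lia.
move=> x; apply: (@list_bound_after_deletion n k) => //.
exact: leq_trans (hL (val x)) (list_size_filter c (L (val x))).
Qed.
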